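(* Let $k$, $c$ and $n$ be positive integers and let $F=(V,E)$ be a $(2,3)$-graph on at least $5^{k-1}cn$ vertices. If $F$ contains no $(2,3)$-path with $n$ vertices, then there exist pairwise disjoint sets $V_1,\dots,V_k\subseteq V$, each of size at least $cn$, such that no edge of $E$ is a transversal with respect to $V_1,\dots,V_k$, and there is no $3$-edge $uv(w)\in E$ with $u\in V_1\cup\dots\cup V_{k-1}$ and $v,w\in V_k$.
   Context: A $(2,3)$-graph $F=(V,E)$ consists of a vertex set $V$ and a set $E$ of $2$-edges, which are unordered pairs $uv=\{u,v\}$ of distinct vertices, and $3$-edges, written $uv(w)=(\{u,v\},w)$, consisting of an unordered pair $\{u,v\}$ together with a third vertex $w$, where $u,v,w$ are distinct. A sequence of distinct vertices $(x_1,\dots,x_m)$ is a $(2,3)$-path with $m$ vertices in $F$ if for every $i=1,\dots,m-1$ either $x_ix_{i+1}\in E$ or $x_ix_{i+1}(w_i)\in E$ for some $w_i\in V\setminus\{x_1,\dots,x_m\}$, where all these vertices $w_i$ are distinct. Given pairwise disjoint sets $V_1,\dots,V_k$, a $2$-edge $uv$ is a transversal (with respect to $V_1,\dots,V_k$) if $u$ and $v$ lie in two different sets $V_i$, and a $3$-edge $uv(w)$ is a transversal if $u$, $v$ and $w$ lie in three pairwise different sets $V_i$. *)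

From mathcomp Require Import all_boot.
Set Implicit Arguments. Unset Strict Implicit. Unset Printing Implicit Defensive.

(* A (2,3)-graph on the finite vertex type T.
   2-edges are unordered pairs {u,v} (sets of size 2);
   3-edges uv(w) are pairs ({u,v}, w) with {u,v} of size 2 and w not in {u,v}. *)
Record graph23 (T : finType) := Graph23 {
  edges2 : {set {set T}};
  edges3 : {set ({set T} * T)}
}.

Definition wf_graph23 (T : finType) (F : graph23 T) : Prop :=
  (forall e, e \in edges2 F -> #|e| = 2) /\
  (forall p w, (p, w) \in edges3 F -> #|p| = 2 /\ w \notin p).

Definition is_edge2 (T : finType) (F : graph23 T) (u v : T) : bool :=
  (u != v) && ([set u; v] \in edges2 F).

Definition is_edge3 (T : finType) (F : graph23 T) (u v w : T) : bool :=
  [&& u != v, u != w, v != w & ([set u; v], w) \in edges3 F].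

(* s = (x_1,...,x_m) is a (2,3)-path in F: distinct vertices, and for each
   consecutive pair either a 2-edge, or a 3-edge with third vertex w_i outside
   the path; the chosen w_i are pairwise distinct.  ws records, for each i,
   None (2-edge used) or Some w_i (3-edge used). *)
Definition is_path23 (T : finType) (F : graph23 T) (s : seq T) : Prop :=
  uniq s /\
  exists ws : seq (option T),
    size ws = (size s).-1 /\
    uniq (pmap id ws) /\
    forall x0 : T, forall i, i < (size s).-1 ->
      match nth None ws i with
      | None => is_edge2 F (nth x0 s i) (nth x0 s i.+1)
      | Some w => is_edge3 F (nth x0 s i) (nth x0 s i.+1) w && (w \notin s)
      end.

From mathcomp Require Import all_boot zify.
Set Implicit Arguments. Unset Strict Implicit. Unset Printing Implicit Defensive.

(** The classes are peeled off one at a time by a depth-first search inside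
    the current vertex set W. The search grows a (2,3)-path, extending it by a
    2-edge, or by a 3-edge whose third vertex is still unused, into an
    unvisited vertex; an endpoint with no such extension is retired into a
    set S. As there is no path on n vertices, the path and its witnesses
    always occupy fewer than 2n vertices, and each retired vertex strands at
    most one witness. So when |S| = M, the unvisited part U of W still has
    at least |W| - 2M - 2n vertices, and there is no 2-edge from S to U and
    no 3-edge from S to U whose third vertex lies in U or outside W, except
    through a set L of at most M + n stranded witnesses. Recursing into U,
    with S added to the vertices outside, and removing from S the exceptional
    vertices of the later rounds yields the classes; every round costs a
    linear amount, which the factor 5 per class absorbs. *)

Lemma leq_card_setD (T : finType) (A B : {set T}) : #|A| <= #|A :\: B| + #|B|.
Proof.
rewrite cardsD.
have : #|A :&: B| <= #|A| by rewrite subset_leq_card ?subsetIl.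
have : #|A :&: B| <= #|B| by rewrite subset_leq_card ?subsetIr.
lia.
Qed.

Lemma card_setU_le (T : finType) (A B : {set T}) : #|A :|: B| <= #|A| + #|B|.
Proof. by rewrite leq_card_setU. Qed.

Section Graph23.

Variables (T : finType) (F : graph23 T).

Lemma is_edge2C u v : is_edge2 F u v = is_edge2 F v u.
Proof. by rewrite /is_edge2 eq_sym setUC. Qed.

Lemma is_edge3C u v w : is_edge3 F u v w = is_edge3 F v u w.
Proof.
rewrite /is_edge3 [[set v; u]]setUC [v == u]eq_sym.
by case: (u != v); case: (u != w); case: (v != w).
Qed.

Definition isolated (a : T) (X Y : {set T}) : Prop :=
  forall u, u \in X -> ~~ is_edge2 F a u /\ forall w, w \in Y -> ~~ is_edge3 F a u w.

Lemma isolatedS a (X X' Y Y' : {set T}) :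
  X' \subset X -> Y' \subset Y -> isolated a X Y -> isolated a X' Y'.
Proof.
move=> /subsetP sX /subsetP sY iso u /sX /iso [e2 e3].
by split=> // w /sY; apply: e3.
Qed.

Lemma exit_or_isolated a (X Y : {set T}) :
  (exists2 u, u \in X & is_edge2 F a u \/ exists2 w, w \in Y & is_edge3 F a u w)
  \/ isolated a X Y.
Proof.
have [/existsP [u /andP [uX e]] | no_exit] :=
  boolP [exists u, [&& u \in X & is_edge2 F a u || [exists w in Y, is_edge3 F a u w]]].
  left; exists u => //; case/orP: e => [e2 | /existsP [w /andP [wY e3]]]; first by left.
  by right; exists w.
right=> u uX; split=> [|w wY]; apply: contra no_exit => e; apply/existsP; exists u.
  by rewrite uX e.
by rewrite uX; apply/orP; right; apply/existsP; exists w; rewrite wY.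
Qed.

Definition path23_with (s : seq T) (ws : seq (option T)) : Prop :=
  [/\ uniq s, size ws = (size s).-1, uniq (pmap id ws) &
    forall x0 i, i < (size s).-1 ->
      match nth None ws i with
      | None => is_edge2 F (nth x0 s i) (nth x0 s i.+1)
      | Some w => is_edge3 F (nth x0 s i) (nth x0 s i.+1) w && (w \notin s)
      end].

Lemma path23_withW s ws : path23_with s ws -> is_path23 F s.
Proof. by case=> us hs uws hw; split=> //; exists ws. Qed.

Definition witnesses (ws : seq (option T)) : {set T} := [set w in pmap id ws].

Lemma mem_witnesses ws w : (w \in witnesses ws) = (Some w \in ws).
Proof. by rewrite inE mem_pmap map_id. Qed.

Lemma witnesses_cat ws ws' : witnesses (ws ++ ws') = witnesses ws :|: witnesses ws'.
Proof. by apply/setP=> w; rewrite !inE pmap_cat mem_cat. Qed.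

Lemma card_witnesses ws : #|witnesses ws| <= size ws.
Proof. by rewrite cardsE (leq_trans (card_size _)) // size_pmap count_size. Qed.

Lemma path23_with_cons u x s ws o :
  path23_with (x :: s) ws -> u \notin x :: s -> u \notin witnesses ws ->
  (if o is Some w
   then [&& is_edge3 F u x w, w \notin u :: x :: s & w \notin witnesses ws]
   else is_edge2 F u x) ->
  path23_with (u :: x :: s) (o :: ws).
Proof.
case=> us hs uws hw u_new u_wit ho; split.
- by rewrite cons_uniq u_new.
- by rewrite /= hs.
- by case: o ho => [w /and3P [_ _]|_] //=; rewrite /witnesses inE uws andbT.
move=> x0 [|i] /= lt_i; first by case: o ho => [w /and3P [-> -> _]|].
have := hw x0 i lt_i; case E: (nth None ws i) => [w|] //= /andP [-> w_s].
rewrite inE negb_or w_s andbT; apply: contraNneq u_wit => <-.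
by rewrite mem_witnesses -E mem_nth // hs.
Qed.

Lemma path23_with_behead x s ws :
  path23_with (x :: s) ws -> path23_with s (behead ws).
Proof.
case=> /andP [_ us] hs uws hw; split=> //.
- by rewrite size_behead hs.
- by case: ws {hs hw} uws => [|[w|] ws] //= /andP [].
move=> x0 i lt_i; have lt_Si : i.+1 < (size (x :: s)).-1 by move: lt_i => /=; lia.
have /= := hw x0 i.+1 lt_Si; rewrite nth_behead.
by case: (nth None ws i.+1) => [w|] // /andP [-> ]; rewrite inE negb_or => /andP [].
Qed.

Section DepthFirstSearch.

Variables (n : nat) (W O : {set T}) (M : nat).
Hypothesis no_path : ~ exists s : seq T, size s = n /\ is_path23 F s.
Hypothesis n_gt0 : 0 < n.
Hypothesis disjoint_WO : [disjoint W & O].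
Hypothesis W_large : 2 * M + 2 * n <= #|W|.

Definition visited (s : seq T) (ws : seq (option T)) (S R : {set T}) : {set T} :=
  [set x in s] :|: witnesses ws :|: S :|: R.

Definition unvisited s ws (S R : {set T}) : {set T} := W :\: visited s ws S R.

Definition unused s ws (S R : {set T}) : {set T} := (W :|: O) :\: visited s ws S R.

Lemma in_unvisited u s ws S R : (u \in unvisited s ws S R) =
  [&& u \notin s, u \notin witnesses ws, u \notin S, u \notin R & u \in W].
Proof. by rewrite !inE !negb_or -!andbA. Qed.

Lemma in_unused u s ws S R : (u \in unused s ws S R) =
  [&& u \notin s, u \notin witnesses ws, u \notin S, u \notin R & u \in W :|: O].
Proof. by rewrite !inE !negb_or -!andbA. Qed.

Lemma card_visited s ws S R : #|visited s ws S R| <= size s + size ws + #|S| + #|R|.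
Proof.
have := card_setU_le ([set x in s] :|: witnesses ws :|: S) R.
have := card_setU_le ([set x in s] :|: witnesses ws) S.
have := card_setU_le [set x in s] (witnesses ws).
have := card_witnesses ws; have : #|[set x in s]| <= size s by rewrite cardsE card_size.
rewrite /visited; lia.
Qed.

Lemma visitedS s s' ws ws' S R :
  {subset s <= s'} -> {subset ws <= ws'} -> visited s ws S R \subset visited s' ws' S R.
Proof.
move=> ss' sws'; rewrite /visited !setUSS //; apply/subsetP=> y.
  by rewrite !inE; apply: ss'.
by rewrite !mem_witnesses; apply: sws'.
Qed.

Lemma visited_retreat x s ws S R :
  visited (x :: s) ws S R
  \subset visited s (behead ws) (x |: S) (R :|: witnesses (take 1 ws)).
Proof.
rewrite /visited -{1}[ws](cat_take_drop 1) drop1 witnesses_cat.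
apply/subsetP=> y; rewrite !inE.
by case: (y == x); case: (y \in s); case: (y \in pmap id (take 1 ws));
   case: (y \in pmap id (behead ws)); case: (y \in S); case: (y \in R).
Qed.

(* The path is stored reversed, its head being the current endpoint; S holds
   the retired vertices and R the witnesses of the 3-edges by which they were
   entered. *)
Record dfs_inv s ws (S R : {set T}) : Prop := DfsInv {
  dfs_path : path23_with s ws;
  dfs_short : size s < n;
  dfs_pathW : {subset s <= W};
  dfs_retiredW : S \subset W;
  dfs_path_retired : [disjoint s & S];
  dfs_stranded : #|R| <= #|S|;
  dfs_retired_isolated :
    forall a, a \in S -> isolated a (unvisited s ws S R) (unused s ws S R) }.

Definition dfs_measure (S X : {set T}) : nat := (M - #|S|) * #|T|.+1 + #|X|.

Definition dfs_advances s ws S R : Prop :=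
  exists s' ws' S' R', [/\ dfs_inv s' ws' S' R', #|S'| <= M &
    dfs_measure S' (unvisited s' ws' S' R') < dfs_measure S (unvisited s ws S R)].

Lemma dfs_extend s ws ws' S R u :
  dfs_inv s ws S R -> #|S| <= M -> u \in unvisited s ws S R ->
  {subset ws <= ws'} -> path23_with (u :: s) ws' -> dfs_advances s ws S R.
Proof.
case=> _ short sW SW sS RS iso SM uX ws_ws' p'.
move: (uX); rewrite in_unvisited => /and5P [_ _ uS _ uW].
have sub : visited s ws S R \subset visited (u :: s) ws' S R.
  by apply: visitedS ws_ws' => y ys; rewrite in_cons ys orbT.
exists (u :: s), ws', S, R; split=> //; last first.
  rewrite ltn_add2l; apply: proper_card; apply/properP; split; first exact: setDS.
  by exists u => //; rewrite in_unvisited in_cons eqxx.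
constructor=> //.
- have : size (u :: s) != n.
    apply/eqP=> size_n; apply: no_path.
    by exists (u :: s); split=> //; exact: path23_withW p'.
  by move: short => /=; lia.
- by move=> y; rewrite in_cons => /predU1P [->|/sW].
- by rewrite disjoint_cons uS.
by move=> a /iso; apply: isolatedS; apply: setDS.
Qed.

Lemma dfs_retreat x s ws S R :
  dfs_inv (x :: s) ws S R -> #|S| < M ->
  isolated x (unvisited (x :: s) ws S R) (unused (x :: s) ws S R) ->
  dfs_advances (x :: s) ws S R.
Proof.
case=> p short sW SW sS RS iso SM iso_x.
have xS : x \notin S by rewrite (disjointFr sS) ?mem_head.
have sub := visited_retreat x s ws S R.
exists s, (behead ws), (x |: S), (R :|: witnesses (take 1 ws)).
rewrite /dfs_measure cardsU1 xS add1n; split=> //; last first.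
  have : #|unvisited s (behead ws) (x |: S) (R :|: witnesses (take 1 ws))| <= #|T|.
    exact: max_card.
  have -> : M - #|S| = (M - #|S|.+1).+1 by lia.
  by rewrite mulSn; lia.
constructor.
- exact: path23_with_behead p.
- exact: ltnW short.
- by move=> y ys; apply: sW; rewrite in_cons ys orbT.
- by rewrite subUset sub1set SW sW ?mem_head.
- have [/andP [xs _] _ _ _] := p; move: sS; rewrite disjoint_cons => /andP [_ sS].
  rewrite disjoint_sym disjoint_subset; apply/subsetP=> y.
  by rewrite !inE => /predU1P [-> //|yS]; rewrite (disjointFl sS yS).
- have := card_setU_le R (witnesses (take 1 ws)); have := card_witnesses (take 1 ws).
  by rewrite cardsU1 xS size_take_min; lia.
move=> a; rewrite in_setU1 => /predU1P [->|/iso iso_a];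
  exact: isolatedS (setDS _ sub) (setDS _ sub) _.
Qed.

Lemma dfs_step s ws S R : dfs_inv s ws S R -> #|S| < M -> dfs_advances s ws S R.
Proof.
move=> I SM; have SleM := ltnW SM.
have ws_cons o : {subset ws <= o :: ws} by move=> y yws; rewrite in_cons yws orbT.
case: s I => [|x s] I.
  have ws0 : ws = [::] by case: (dfs_path I) => _ /size0nil.
  have [u uX] : exists u, u \in unvisited [::] ws S R.
    apply/set0Pn; rewrite -card_gt0.
    have := leq_card_setD W (visited [::] ws S R); have := card_visited [::] ws S R.
    by have := dfs_stranded I; rewrite /unvisited ws0 /=; lia.
  by apply: (dfs_extend I SleM uX (fun y yws => yws)); rewrite ws0.
have [[u uX [e2 | [w wY e3]]] | iso] :=
  exit_or_isolated x (unvisited (x :: s) ws S R) (unused (x :: s) ws S R).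
- apply: (dfs_extend I SleM uX (ws_cons None)).
  move: uX; rewrite in_unvisited => /and5P [u_s u_ws _ _ _].
  by apply: path23_with_cons (dfs_path I) u_s u_ws _; rewrite is_edge2C.
- apply: (dfs_extend I SleM uX (ws_cons (Some w))).
  move: uX; rewrite in_unvisited => /and5P [u_s u_ws _ _ _].
  apply: path23_with_cons (dfs_path I) u_s u_ws _.
  move: wY; rewrite in_unused is_edge3C e3 => /and5P [w_s w_ws _ _ _].
  by case/and4P: e3 => _ _ uw _; rewrite inE negb_or w_s w_ws eq_sym uw.
exact: dfs_retreat I SM iso.
Qed.

Lemma dfs_run s ws S R :
  dfs_inv s ws S R -> #|S| <= M -> exists s' ws' S' R', dfs_inv s' ws' S' R' /\ #|S'| = M.
Proof.
have [m] := ubnP (dfs_measure S (unvisited s ws S R)).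
elim: m s ws S R => // m IH s ws S R lt_m I SM.
have [SltM | MleS] := ltnP #|S| M; last first.
  by exists s, ws, S, R; split=> //; apply/eqP; rewrite eqn_leq SM MleS.
have [s' [ws' [S' [R' [I' SM' dec]]]]] := dfs_step I SltM.
exact: IH (leq_trans dec lt_m) I' SM'.
Qed.

Lemma dfs_separation : exists S U L : {set T},
  [/\ S \subset W, U \subset W, [disjoint S & U], #|S| = M &
   [/\ #|W| <= #|U| + 2 * M + 2 * n, #|L| <= M + n &
       forall a, a \in S -> isolated a U (U :|: (O :\: L))]].
Proof.
have I0 : dfs_inv [::] [::] set0 set0.
  by constructor; rewrite ?sub0set ?cards0 ?disjoint_has // => a; rewrite inE.
have [|s [ws [S [R [[p short sW SW sS RS iso] SM]]]]] := dfs_run I0.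
  by rewrite cards0.
have size_ws : size ws < n by case: p => _ ->; lia.
exists S, (unvisited s ws S R), (witnesses ws :|: R); split=> //.
- exact: subsetDl.
- by rewrite disjoint_subset; apply/subsetP=> y yS; rewrite !inE yS !orbT.
split.
- have := leq_card_setD W (visited s ws S R); have := card_visited s ws S R.
  rewrite /unvisited; lia.
- by have := card_setU_le (witnesses ws) R; have := card_witnesses ws; lia.
move=> a /iso; apply: isolatedS; first exact: subxx.
rewrite subUset setSD ?subsetUl //=; apply/subsetP=> w /setDP [wO wL].
have wW : w \in W = false by rewrite (disjointFl disjoint_WO wO).
move: wL; rewrite in_unused !inE negb_or => /andP [-> ->]; rewrite wO orbT /= andbT.
by apply/andP; split; apply: contraFN wW; [apply: sW | apply: (subsetP SW)].
Qed.

End DepthFirstSearch.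

(* The classes Vs 0, ..., Vs j live in W; O holds the vertices outside W, and
   3-edges between two classes through a third vertex of O are excluded
   except through the exceptional set L. *)
Record separated_family (N j : nat) (W O L : {set T}) (Vs : nat -> {set T}) : Prop :=
  SeparatedFamily {
  family_sub : forall i, i <= j -> Vs i \subset W;
  family_disjoint : forall i i', i <= j -> i' <= j -> i != i' -> [disjoint Vs i & Vs i'];
  family_large : forall i, i <= j -> N <= #|Vs i|;
  family_edge2 : forall u v i i', i <= j -> i' <= j -> i != i' ->
    u \in Vs i -> v \in Vs i' -> ~~ is_edge2 F u v;
  family_edge3 : forall u v w i i' l, i <= j -> i' <= j -> l <= j ->
    i != i' -> i != l -> i' != l ->
    u \in Vs i -> v \in Vs i' -> w \in Vs l -> ~~ is_edge3 F u v w;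
  family_last : forall u v w i, i < j ->
    u \in Vs i -> v \in Vs j -> w \in Vs j -> ~~ is_edge3 F u v w;
  family_outer : forall u v w i i', i <= j -> i' <= j -> i != i' ->
    u \in Vs i -> v \in Vs i' -> w \in O -> w \notin L -> ~~ is_edge3 F u v w }.

Lemma separated_family_single N (W O : {set T}) :
  N <= #|W| -> separated_family N 0 W O set0 (fun=> W).
Proof.
move=> W_large; constructor=> //.
- by move=> i i'; rewrite !leqn0 => /eqP -> /eqP ->; rewrite eqxx.
- by move=> u v i i'; rewrite !leqn0 => /eqP -> /eqP ->; rewrite eqxx.
- by move=> u v w i i' l; rewrite !leqn0 => /eqP -> /eqP ->; rewrite eqxx.
- by move=> u v w i i'; rewrite !leqn0 => /eqP -> /eqP ->; rewrite eqxx.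
Qed.

Definition cons_family (A : {set T}) (Vs : nat -> {set T}) (i : nat) : {set T} :=
  if i is i'.+1 then Vs i' else A.

Section ConsFamily.

Variables (N j : nat) (W O S U L1 L : {set T}) (Vs : nat -> {set T}).
Hypotheses (SW : S \subset W) (UW : U \subset W) (disjoint_SU : [disjoint S & U]).
Hypothesis S_isolated : forall a, a \in S -> isolated a U (U :|: (O :\: L1)).
Hypothesis S_large : N + #|L| <= #|S|.
Hypothesis tail : separated_family N j U (S :|: (O :\: L1)) L Vs.

Let Vs' := cons_family (S :\: L) Vs.

Lemma mem_tail i v : i <= j -> v \in Vs i -> v \in U.
Proof. by move=> /(family_sub tail) /subsetP; apply. Qed.

Lemma head_isolated u v i : u \in S :\: L -> i <= j -> v \in Vs i ->
  ~~ is_edge2 F u v /\ forall w, w \in U :|: (O :\: L1) -> ~~ is_edge3 F u v w.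
Proof. by move=> /setDP [uS _] hi /(mem_tail hi); apply: S_isolated. Qed.

Lemma cons_family_edge2 u v i i' : i <= j.+1 -> i' <= j.+1 -> i != i' ->
  u \in Vs' i -> v \in Vs' i' -> ~~ is_edge2 F u v.
Proof.
wlog lt_ii' : u v i i' / i < i'.
  move=> gen hi hi' ne; have := ne; rewrite neq_ltn => /orP [lt | lt] hu hv.
    exact: gen hu hv.
  by rewrite is_edge2C; apply: (gen v u i' i); rewrite // eq_sym.
case: i' lt_ii' => // i' _; case: i => [|i] hi hi' ne; rewrite /Vs' /= => hu hv.
  exact: (head_isolated hu hi' hv).1.
by apply: (family_edge2 tail _ _ _ hu hv).
Qed.

Lemma cons_family_edge3 u v w i i' l : i <= j.+1 -> i' <= j.+1 -> l <= j.+1 ->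
  i != i' -> i != l -> i' != l -> u \in Vs' i -> v \in Vs' i' -> w \in Vs' l ->
  ~~ is_edge3 F u v w.
Proof.
wlog lt_ii' : u v i i' / i < i'.
  move=> gen hi hi' hl ne; have := ne.
  rewrite neq_ltn => /orP [lt | lt] hil hi'l hu hv hw.
    exact: gen hu hv hw.
  by rewrite is_edge3C; apply: (gen v u i' i); rewrite // eq_sym.
case: i' lt_ii' => // i' _.
case: i l => [|i] [|l] hi hi' hl ne hil hi'l; rewrite /Vs' /= => hu hv hw //.
- by apply: (head_isolated hu hi' hv).2; rewrite inE (mem_tail hl hw).
- case/setDP: hw => wS wL.
  by apply: (family_outer tail _ _ _ hu hv _ wL) => //; rewrite inE wS.
by apply: (family_edge3 tail _ _ _ _ _ _ hu hv hw).
Qed.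

Lemma cons_family_outer u v w i i' : i <= j.+1 -> i' <= j.+1 -> i != i' ->
  u \in Vs' i -> v \in Vs' i' -> w \in O -> w \notin L1 :|: L -> ~~ is_edge3 F u v w.
Proof.
wlog lt_ii' : u v i i' / i < i'.
  move=> gen hi hi' ne; have := ne; rewrite neq_ltn => /orP [lt | lt] hu hv.
    exact: gen hu hv.
  by rewrite is_edge3C; apply: (gen v u i' i); rewrite // eq_sym.
case: i' lt_ii' => // i' _; case: i => [|i] hi hi' ne; rewrite /Vs' /= => hu hv wO;
  rewrite inE negb_or => /andP [wL1 wL].
  by apply: (head_isolated hu hi' hv).2; rewrite !inE wO wL1 orbT.
by apply: (family_outer tail _ _ _ hu hv _ wL) => //; rewrite !inE wO wL1 orbT.
Qed.

Lemma cons_family_separated : separated_family N j.+1 W O (L1 :|: L) Vs'.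
Proof.
have sub_head : S :\: L \subset S by apply: subsetDl.
constructor.
- move=> [|i] hi; first exact: subset_trans sub_head SW.
  exact: subset_trans (family_sub tail hi) UW.
- move=> [|i] [|i'] hi hi' ne //.
  + exact: disjointW sub_head (family_sub tail hi') disjoint_SU.
  + by rewrite disjoint_sym; apply: disjointW sub_head (family_sub tail hi) disjoint_SU.
  + exact: (family_disjoint tail hi hi' ne).
- move=> [|i] hi; last exact: (family_large tail hi).
  by have := leq_card_setD S L; move: S_large; rewrite /Vs' /=; lia.
- exact: cons_family_edge2.
- exact: cons_family_edge3.
- move=> u v w [|i] hi hu hv hw.
    by apply: (head_isolated hu (leqnn j) hv).2; rewrite inE (mem_tail (leqnn j) hw).
  by apply: (family_last tail _ hu hv hw).
- exact: cons_family_outer.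
Qed.

End ConsFamily.

(* A round with |S| = M := N + exceptional_bound N n j strands at most M + n
   witnesses, on top of the exceptional set of the later rounds. *)
Fixpoint exceptional_bound (N n j : nat) : nat :=
  if j is j'.+1 then N + n + 2 * exceptional_bound N n j' else 0.

Lemma exceptional_bound_le N n j : n <= N -> N + 2 * exceptional_bound N n j <= 5 ^ j * N.
Proof.
move=> n_le; elim: j => [|j IH] /=; first by rewrite mul1n addn0.
have : N <= 5 ^ j * N by rewrite leq_pmull // expn_gt0.
by rewrite expnS -mulnA; lia.
Qed.

Lemma separated_family_exists n N j (W O : {set T}) :
  ~ (exists s : seq T, size s = n /\ is_path23 F s) -> 0 < n ->
  [disjoint W & O] -> N + 2 * exceptional_bound N n j <= #|W| ->
  exists (Vs : nat -> {set T}) (L : {set T}),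
    #|L| <= exceptional_bound N n j /\ separated_family N j W O L Vs.
Proof.
move=> no_path n_gt0; elim: j W O => [|j IH] W O disjoint_WO W_large.
  exists (fun=> W), set0; rewrite cards0; split=> //.
  by apply: separated_family_single; rewrite -[N]addn0.
set M := N + exceptional_bound N n j.
have [|S [U [L1 [SW UW disjoint_SU SM [U_large L1_small S_isolated]]]]] :=
  dfs_separation (M := M) no_path n_gt0 disjoint_WO.
  by move: W_large; rewrite /M /=; lia.
have disjoint_U : [disjoint U & S :|: (O :\: L1)].
  rewrite disjoint_subset; apply/subsetP=> y yU.
  have yW := subsetP UW y yU.
  by rewrite !inE (disjointFl disjoint_SU yU) (disjointFr disjoint_WO yW) andbF.
have [|Vs [L [L_small tail]]] := IH U _ disjoint_U.
  by move: U_large W_large; rewrite /M /=; lia.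
exists (cons_family (S :\: L) Vs), (L1 :|: L); split.
  by have := card_setU_le L1 L; move: L1_small L_small; rewrite /M /=; lia.
by apply: (cons_family_separated SW UW disjoint_SU S_isolated _ tail); rewrite SM /M; lia.
Qed.

End Graph23.

Unset Implicit Arguments.

Theorem lemma3p2 (k c n : nat) (T : finType) (F : graph23 T) :
  0 < k -> 0 < c -> 0 < n ->
  wf_graph23 F ->
  5 ^ (k - 1) * c * n <= #|T| ->
  ~ (exists s : seq T, size s = n /\ is_path23 F s) ->
  exists Vs : nat -> {set T},
    [/\ (forall i j, i < k -> j < k -> i != j -> [disjoint Vs i & Vs j]),
        (forall i, i < k -> c * n <= #|Vs i|),
        (forall u v i j, i < k -> j < k -> i != j ->
            u \in Vs i -> v \in Vs j -> ~~ is_edge2 F u v),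
        (forall u v w i j l, i < k -> j < k -> l < k ->
            i != j -> i != l -> j != l ->
            u \in Vs i -> v \in Vs j -> w \in Vs l -> ~~ is_edge3 F u v w)
      & (forall u v w i, i < k.-1 ->
            u \in Vs i -> v \in Vs k.-1 -> w \in Vs k.-1 -> ~~ is_edge3 F u v w)].
Proof.
move=> + c_gt0 n_gt0 _ + no_path; case: k => // j _ T_large.
have n_le : n <= c * n by rewrite leq_pmull.
have disjoint_T0 : [disjoint [set: T] & set0] by rewrite -setI_eq0 setI0.
have [|Vs [L [_ [_ ? ? ? ? ? _]]]] :=
  separated_family_exists (N := c * n) (j := j) no_path n_gt0 disjoint_T0.
  rewrite cardsT (leq_trans (exceptional_bound_le j n_le)) //.
  by rewrite subn1 -mulnA in T_large.
by exists Vs.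
Qed.
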